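(* Let $\mathcal H$ be a Heisenberg $p$-group with centre $\mathcal Z$ and let $\alpha$ be an automorphism of $\mathcal H$ of order two whose restriction to $\mathcal Z$ is not the identity; let $\mathcal H^+_\alpha=\{h\in\mathcal H:\alpha(h)=h\}$. Then $\mathcal H^+_\alpha\,\alpha(h)\,\mathcal H^+_\alpha=\mathcal H^+_\alpha\,h^{-1}\,\mathcal H^+_\alpha$ for all $h\in\mathcal H$, and consequently $(\mathcal H,\mathcal H^+_\alpha)$ is a Gelfand pair: for every irreducible representation $\rho$ of $\mathcal H$, $\dim\operatorname{Hom}_{\mathcal H^+_\alpha}(\rho,1)\le1$.
   Context: $p$ is an odd prime. A Heisenberg $p$-group is a group isomorphic to $W\boxtimes C$, where $C$ is cyclic of order $p$, $W$ is a finite $\mathbb F_p$-vector space with a nondegenerate alternating biadditive $C$-valued form $\langle\,,\rangle$, and $W\boxtimes C$ is $W\times C$ with multiplication $(w_1,z_1)(w_2,z_2)=(w_1+w_2,z_1+z_2+\tfrac12\langle w_1,w_2\rangle)$. *)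

From HB Require Import structures.
From mathcomp Require Import all_boot all_order all_algebra all_fingroup all_solvable all_field all_character.
Set Implicit Arguments. Unset Strict Implicit. Unset Printing Implicit Defensive.
Import GRing.Theory.

(* The concrete model W ⊠ C with W = 'rV['F_p]_n and C = 'F_p (additive). *)
Section Heis.
Variables (p n : nat).
Local Open Scope ring_scope.

Definition alt_nondeg_form (B : 'rV['F_p]_n -> 'rV['F_p]_n -> 'F_p) : Prop :=
  [/\ (forall u v w, B (u + v) w = B u w + B v w),
      (forall u v w, B u (v + w) = B u v + B u w),
      (forall w, B w w = 0)
    & (forall w, (forall v, B w v = 0) -> w = 0)].

Definition heis_mul (B : 'rV['F_p]_n -> 'rV['F_p]_n -> 'F_p)
  (x y : 'rV['F_p]_n * 'F_p) : 'rV['F_p]_n * 'F_p :=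
  (x.1 + y.1, x.2 + y.2 + (2%:R)^-1 * B x.1 y.1).
End Heis.

Definition heisenberg_group (p : nat) (gT : finGroupType) (G : {set gT}) : Prop :=
  [/\ prime p, odd p &
    exists n (B : 'rV['F_p]_n -> 'rV['F_p]_n -> 'F_p),
      alt_nondeg_form B /\
      exists f : 'rV['F_p]_n * 'F_p -> gT,
        [/\ injective f, f @: setT = G &
            forall x y, f (heis_mul B x y) = (f x * f y)%g]].

(* dim Hom_H(rho, 1): the space of linear functionals c (column vectors) with
   rG h *m c = c for all h in H, encoded as row vectors u = c^T satisfying
   u *m ((rG h)^T - 1) = 0. *)
Definition dim_hom_triv (gT : finGroupType) (G : {group gT}) (d : nat)
  (rG : mx_representation algC G d) (H : {set gT}) : nat :=
  \rank (\bigcap_(h in H) kermx ((rG h)^T - 1%:M))%MS.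

From mathcomp Require Import all_boot all_order all_algebra all_fingroup all_solvable all_field all_character.
Set Implicit Arguments. Unset Strict Implicit. Unset Printing Implicit Defensive.
Import GRing.Theory Num.Theory.

(* An involutive automorphism [a] of a group of odd order admits a polar
   decomposition: every [g] satisfies [a g = u g^-1 u] with [u] fixed by [a]
   (take [u = g v^-1], where [v] is the square root of [(a g)^-1 g] in its
   cyclic group, so that [a v = v^-1]).  Hence [tau x := (a x)^-1] is an
   anti-automorphism preserving the fixed subgroup [H] and every double coset
   [H x H], and Gelfand's trick applies: the Hecke algebra [P rG(x) P], with [P]
   the averaging projector over [H], is commutative.  For an irreducible
   representation over [algC] every matrix is in the enveloping algebra, so the
   corner [P M P] of the full matrix algebra is commutative, which forces the
   space of [H]-fixed vectors to have dimension at most one. *)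

Lemma heisenberg_group_odd p (gT : finGroupType) (G : {set gT}) :
  heisenberg_group p G -> odd #|G|.
Proof.
case=> p_pr odd_p [n [B [_ [f [inj_f <- _]]]]].
by rewrite card_imset // cardsT card_prod card_mx card_Fp // oddM oddX odd_p orbT.
Qed.

Section CornerAlgebra.
Local Open Scope ring_scope.

Lemma rank_fixed_le1_of_corner_comm (F : fieldType) d (P U : 'M[F]_d) :
  (forall u : 'rV_d, (u <= U)%MS -> u *m P = u) ->
  (forall X Y, P *m X *m P *m (P *m Y *m P) = P *m Y *m P *m (P *m X *m P)) ->
  (\rank U <= 1)%N.
Proof.
move=> fixU corner_comm.
have [->|nzU] := eqVneq U 0; first by rewrite mxrank0.
pose u0 := nz_row U; have u0U : (u0 <= U)%MS := nz_row_sub U.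
have [i u0i] : exists i, u0 0 i != 0.
  apply/existsP; apply: contraR nzU => /existsPn u0_0; rewrite -nz_row_eq0.
  by apply/eqP/rowP => i; rewrite mxE; apply/eqP/negPn.
pose s : 'cV[F]_d := (u0 0 i)^-1 *: delta_mx i 0.
have u0Ps : u0 *m (P *m s) = 1%:M.
  rewrite mulmxA fixU // -scalemxAr -colE.
  by apply/matrixP => x y; rewrite !ord1 !mxE eqxx mulVf.
suff sub_u0 (u : 'rV_d) : (u <= U)%MS -> (u <= u0)%MS.
  by apply: leq_trans (rank_leq_row u0); apply/mxrankS/row_subP => j; exact/sub_u0/row_sub.
(* Multiplying the corner identity for [s u] and [s u0] on the left by [u0]
   yields [u = (u P s) u0]. *)
move=> uU; have := corner_comm (s *m u) (s *m u0).
rewrite -!(mulmxA _ _ P) !fixU // !mulmxA => /(congr1 (mulmx u0)).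
rewrite !mulmxA -![u0 *m P *m s]mulmxA u0Ps !mul1mx.
rewrite -[u0 *m P *m s]mulmxA u0Ps mul1mx => <-.
exact: submxMl.
Qed.

End CornerAlgebra.

Section OddOrderInvolution.
Variables (gT : finGroupType) (G : {group gT}) (a : {perm gT}).
Local Open Scope group_scope.
Hypotheses (AutGa : a \in Aut G) (o_a : #[a] = 2) (oddG : odd #|G|).

Lemma aut_invol x : a (a x) = x.
Proof. by rewrite -permM -[a * a]/(a ^+ 2) -o_a expg_order perm1. Qed.

Lemma autM : {in G &, {morph a : x y / x * y}}.
Proof. by move=> x y Gx Gy; rewrite -!(autmE AutGa) morphM. Qed.

Lemma autV : {in G, {morph a : x / x^-1}}.
Proof. by move=> x Gx; rewrite -!(autmE AutGa) morphV. Qed.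

Lemma autX n : {in G, {morph a : x / x ^+ n}}.
Proof. by move=> x Gx; rewrite -!(autmE AutGa) morphX. Qed.

Definition aut_fixed := [set x in G | a x == x].

Lemma aut_fixed_group_set : group_set aut_fixed.
Proof.
apply/group_setP; split; first by rewrite inE group1 -(autmE AutGa) morph1 /=.
move=> x y /setIdP[Gx /eqP ax] /setIdP[Gy /eqP ay].
by rewrite inE groupM // autM // ax ay /=.
Qed.
Canonical aut_fixed_group := Group aut_fixed_group_set.

Lemma aut_fixedP x : reflect (x \in G /\ a x = x) (x \in aut_fixed).
Proof. by rewrite inE; apply: (iffP andP) => -[Gx /eqP]. Qed.

Lemma aut_fixed_sub : aut_fixed \subset G.
Proof. by apply/subsetP => x /aut_fixedP[]. Qed.

Lemma aut_inv_invol : involutive (fun x => (a x)^-1).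
Proof.
move=> x; have [Gx | notGx] := boolP (x \in G).
  by rewrite autV ?(Aut_closed AutGa) // aut_invol invgK.
by rewrite !(out_Aut AutGa) ?invgK // groupV.
Qed.

Lemma aut_polar g : g \in G -> exists2 u, u \in aut_fixed & a g = u * g^-1 * u.
Proof.
move=> Gg; have Gag := Aut_closed AutGa Gg; pose w := (a g)^-1 * g.
have Gw : w \in G by rewrite groupM ?groupV.
have aw : a w = w^-1 by rewrite autM ?groupV // autV // aut_invol invMg invgK.
(* [#[w]] is odd, so [w] has a square root in [<[w]>] *)
pose v := w ^+ (#[w]).+1./2.
have vv : v * v = w.
  have odd_w : odd #[w] := dvdn_odd (order_dvdG Gw) oddG.
  by rewrite -expgD addnn halfK /= odd_w subn0 expgS expg_order mulg1.
have Gv : v \in G by rewrite groupX.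
have av : a v = v^-1 by rewrite autX // aw expgVn.
have ag : a g = g * (v * v)^-1 by rewrite vv invMg invgK mulgA mulgV mul1g.
exists (g * v^-1); last by rewrite ag !mulgA mulgKV invMg mulgA.
apply/aut_fixedP; rewrite groupM ?groupV // autM ?groupV // autV // av invgK.
by rewrite ag invMg mulgA mulgKV.
Qed.

Lemma aut_double_coset h : h \in G ->
  aut_fixed :* a h * aut_fixed = aut_fixed :* h^-1 * aut_fixed.
Proof.
move=> Gh; have [u fix_u ->] := aut_polar Gh.
by rewrite !rcosetM (rcoset_id fix_u) -mulgA (lcoset_id fix_u).
Qed.

Lemma aut_inv_double_coset x : x \in G -> (a x)^-1 \in aut_fixed :* x * aut_fixed.
Proof.
move=> Gx; have [u fix_u ->] := aut_polar Gx.
rewrite !invMg invgK mulgA; apply: mem_mulg; last by rewrite groupV.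
by apply/rcosetP; exists u^-1; rewrite ?groupV.
Qed.

End OddOrderInvolution.

Section GelfandTrick.
Variables (gT : finGroupType) (G H : {group gT}) (tau : gT -> gT).
Hypotheses (sHG : H \subset G) (tau_invol : involutive tau)
  (tauM : {in G &, forall x y, tau (x * y)%g = (tau y * tau x)%g})
  (tauH : {in H, forall h, tau h \in H})
  (tau_double_coset : {in G, forall x, tau x \in (H :* x * H)%g}).
Variables (d : nat) (rG : mx_representation algC G d).
Local Open Scope ring_scope.

Let memHG := subsetP sHG.

Definition H_average : 'M[algC]_d := #|H|%:R^-1 *: \sum_(h in H) rG h.
Local Notation P := H_average.

Lemma sum_H_const (V : lmodType algC) (v : V) : #|H|%:R^-1 *: \sum_(h in H) v = v.
Proof.
by rewrite sumr_const -scaler_nat scalerA mulVf ?scale1r // pnatr_eq0 -lt0n cardG_gt0.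
Qed.

Lemma H_average_mulr h : h \in H -> P *m rG h = P.
Proof.
move=> Hh; rewrite -scalemxAl mulmx_suml (reindex_inj (mulIg h^-1%g)) /=.
congr (_ *: _); apply: eq_big => [k | k]; first by rewrite groupMr ?groupV.
by move=> Hk; rewrite -repr_mxM ?mulgKV ?memHG.
Qed.

Lemma H_average_mull h : h \in H -> rG h *m P = P.
Proof.
move=> Hh; rewrite -scalemxAr mulmx_sumr (reindex_inj (mulgI h^-1%g)) /=.
congr (_ *: _); apply: eq_big => [k | k]; first by rewrite groupMl ?groupV.
by move=> Hk; rewrite -repr_mxM ?mulKVg ?memHG.
Qed.

Lemma H_average_idem : P *m P = P.
Proof.
rewrite {1}/H_average -scalemxAr mulmx_sumr.
by rewrite (eq_bigr (fun _ => P)) ?sum_H_const // => h /H_average_mulr.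
Qed.

Definition hecke x := P *m rG x *m P.

Lemma hecke_double_coset u x v : u \in H -> x \in G -> v \in H ->
  hecke (u * x * v)%g = hecke x.
Proof.
move=> Hu Gx Hv; have Gu := memHG Hu; have Gv := memHG Hv.
rewrite /hecke !repr_mxM ?groupM //.
by rewrite !mulmxA H_average_mulr // -!mulmxA H_average_mull.
Qed.

Lemma hecke_tau x : x \in G -> hecke (tau x) = hecke x.
Proof.
move=> Gx; case/mulsgP: (tau_double_coset Gx) => _ v /rcosetP[u Hu ->] Hv ->.
exact: hecke_double_coset.
Qed.

Lemma mulmx_H_average m n (A : 'M[algC]_(m, d)) (B : 'M[algC]_(d, n)) :
  A *m P *m B = #|H|%:R^-1 *: \sum_(h in H) A *m rG h *m B.
Proof. by rewrite /H_average -scalemxAr -scalemxAl mulmx_sumr mulmx_suml. Qed.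

Lemma hecke_mul x y : x \in G -> y \in G ->
  hecke x *m hecke y = #|H|%:R^-1 *: \sum_(h in H) hecke (x * h * y)%g.
Proof.
move=> Gx Gy; rewrite {1 2}/hecke -!mulmxA (mulmxA P P) H_average_idem !mulmxA.
rewrite -(mulmxA _ (rG y)) mulmx_H_average; congr (_ *: _); apply: eq_bigr => h /memHG Gh.
by rewrite /hecke !repr_mxM ?groupM // !mulmxA.
Qed.

Lemma hecke_comm x y : x \in G -> y \in G -> hecke x *m hecke y = hecke y *m hecke x.
Proof.
move=> Gx Gy; rewrite !hecke_mul //; congr (_ *: _).
case/mulsgP: (tau_double_coset Gx) => _ v /rcosetP[u Hu ->] Hv tau_x.
case/mulsgP: (tau_double_coset Gy) => _ v' /rcosetP[u' Hu' ->] Hv' tau_y.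
have tau_mem k : (tau k \in H) = (k \in H).
  by apply/idP/idP => [/tauH | /tauH //]; rewrite tau_invol.
have inj_h : injective (fun k => v * tau k * u')%g.
  by move=> k1 k2 /mulIg/mulgI/(can_inj tau_invol).
(* reindex by [h = v (tau k) u'], so that [x h y] and [tau (y k x)] lie in the
   same [H]-double coset *)
rewrite (reindex_inj inj_h) /=; apply: eq_big => [k | k].
  by rewrite groupMr // groupMl // tau_mem.
rewrite groupMr // groupMl // tau_mem => Hk.
have Gk := memHG Hk; have Gtk := memHG (tauH Hk).
have Gv := memHG Hv; have Gu' := memHG Hu'.
rewrite -[RHS]hecke_tau ?groupM // !tauM ?groupM // tau_x tau_y.
by rewrite -(hecke_double_coset Hu _ Hv') ?groupM // !mulgA.
Qed.

Lemma hecke_envelop_comm X Y :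
  (X \in enveloping_algebra_mx rG)%MS -> (Y \in enveloping_algebra_mx rG)%MS ->
  P *m X *m P *m (P *m Y *m P) = P *m Y *m P *m (P *m X *m P).
Proof.
case/envelop_mxP => c ->; case/envelop_mxP => c' ->.
have corner_sum (e : gT -> algC) :
    P *m (\sum_(x in G) e x *: rG x) *m P = \sum_(x in G) e x *: hecke x.
  rewrite mulmx_sumr mulmx_suml; apply: eq_bigr => x _.
  by rewrite -(scalemxAr (e x) P) -scalemxAl.
rewrite !corner_sum !mulmx_suml.
under eq_bigr do rewrite mulmx_sumr.
under [RHS]eq_bigr do rewrite mulmx_sumr.
rewrite [RHS]exchange_big; apply: eq_bigr => x Gx; apply: eq_bigr => y Gy.
by rewrite -!scalemxAl -!scalemxAr hecke_comm // !scalerA mulrC.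
Qed.

Lemma hecke_corner_comm X Y : mx_irreducible rG ->
  P *m X *m P *m (P *m Y *m P) = P *m Y *m P *m (P *m X *m P).
Proof.
move=> irr_rG; have /andP[_ full_env] := group_closure_closed_field irr_rG.
by apply: hecke_envelop_comm; apply: submx_full.
Qed.

Lemma H_fixed_row (u : 'rV[algC]_d) :
  (u <= \bigcap_(h in H) kermx ((rG h)^T - 1%:M))%MS -> u *m P^T = u.
Proof.
move/sub_bigcapmxP=> u_fix; rewrite /H_average linearZ linear_sum /= -scalemxAr mulmx_sumr.
rewrite (eq_bigr (fun _ => u)) ?sum_H_const // => h Hh.
by apply/eqP; rewrite -subr_eq0 -{2}[u]mulmx1 -mulmxBr; apply/eqP/sub_kermxP/u_fix.
Qed.

Lemma gelfand_trick : mx_irreducible rG -> (dim_hom_triv rG H <= 1)%N.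
Proof.
move=> irr_rG; apply: (rank_fixed_le1_of_corner_comm (P := P^T)) => [u | X Y].
  exact: H_fixed_row.
apply: trmx_inj; rewrite !trmx_mul !trmxK !mulmxA.
by have := hecke_corner_comm Y^T X^T irr_rG; rewrite !mulmxA.
Qed.

End GelfandTrick.

Theorem theorem2p39 (p : nat) (gT : finGroupType) (G : {group gT})
  (a : {perm gT}) :
  heisenberg_group p G ->
  a \in Aut G -> #[a]%g = 2 ->
  (exists2 z, z \in ('Z(G))%g & a z != z) ->
  let Hp := [set h in G | a h == h] in
  (forall h, h \in G -> (Hp :* a h) * Hp = (Hp :* h^-1) * Hp)%g /\
  (forall (d : nat) (rG : mx_representation algC G d),
      mx_irreducible rG -> (dim_hom_triv rG Hp <= 1)%N).
Proof.
move=> heisG AutGa o_a _ Hp; rewrite {}/Hp; have oddG := heisenberg_group_odd heisG.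
split=> [h Gh | d rG]; first exact: aut_double_coset.
have tauM : {in G &, forall x y, (a (x * y))^-1 = (a y)^-1 * (a x)^-1}%g.
  by move=> x y Gx Gy; rewrite (autM AutGa) // invMg.
have tauH : {in aut_fixed_group AutGa, forall h, (a h)^-1 \in aut_fixed_group AutGa}%g.
  by move=> h fix_h; have /aut_fixedP[_ ->] := fix_h; rewrite groupV.
exact: (gelfand_trick (aut_fixed_sub G a) (aut_inv_invol AutGa o_a) tauM tauH
                      (aut_inv_double_coset AutGa o_a oddG)).
Qed.
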